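(* Let $\mathbf{k}=\mathbb{R}$ or $\mathbf{k}=\mathbb{C}$ and $n\geq2$. There exists a map $\rho\colon[-1,1]\to\mathrm{Bir}(\mathbb{P}^n_{\mathbf{k}})$, continuous for the Euclidean topologies, such that for arbitrarily small $\varepsilon>0$ and any $d\geq1$ there is no continuous map $\rho_\varepsilon\colon(-\varepsilon,\varepsilon)\to H_d(\mathbf{k})$ with $\rho|_{(-\varepsilon,\varepsilon)}=\pi_d\circ\rho_\varepsilon$.
   Context: For $d\geq1$, $W_d(\mathbf{k})$ is the projective space of classes $[h_0:\dots:h_n]$ of non-zero $(n+1)$-tuples of homogeneous polynomials of degree $d$ in $\mathbf{k}[x_0,\dots,x_n]$ modulo scalars, with its Euclidean topology; $H_d(\mathbf{k})\subset W_d(\mathbf{k})$ (subspace topology) is the set of $h$ such that $\psi_h\colon[x]\dashrightarrow[h_0(x):\dots:h_n(x)]$ is birational; $\pi_d\colon H_d(\mathbf{k})\to\mathrm{Bir}(\mathbb{P}^n_{\mathbf{k}})$, $h\mapsto\psi_h$, with image $\mathrm{Bir}(\mathbb{P}^n_{\mathbf{k}})_{\leq d}$ (maps of degree $\leq d$). The Euclidean topology on $\mathrm{Bir}(\mathbb{P}^n_{\mathbf{k}})_{\leq d}$ is the quotient topology via $\pi_d$, and on $\mathrm{Bir}(\mathbb{P}^n_{\mathbf{k}})$ the inductive limit topology of the $\mathrm{Bir}(\mathbb{P}^n_{\mathbf{k}})_{\leq d}$. *)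

From HB Require Import structures.
From mathcomp Require Import all_boot all_order all_algebra.
From mathcomp Require Import mpoly.
From mathcomp Require Import complex.
From mathcomp Require Import reals.

Set Implicit Arguments.
Unset Strict Implicit.
Unset Printing Implicit Defensive.

Import Order.TTheory GRing.Theory Num.Theory.
Local Open Scope ring_scope.

(* The ground field k: for a model R of the real numbers,
   k = R (b = false) or k = C = R[i] (b = true). *)
Definition kfld (R : realType) (b : bool) : numFieldType :=
  if b then (R[i] : numFieldType) else (R : numFieldType).

Section Defs.
Variables (K : numFieldType) (n : nat).

Definition tup := 'I_n.+1 -> {mpoly K[n.+1]}.

Definition homtup (d : nat) (h : tup) : Prop := forall i, h i \is d.-homog.
Definition nonzero (h : tup) : Prop := exists i, h i != 0.

Definition comp_tup (g h : tup) : tup :=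
  fun i => comp_mpoly [tuple h j | j < n.+1] (g i).

(* psi_h is birational: there is a polynomial tuple g (over k) with
   g o h = q . id and h o g = q' . id, q, q' nonzero polynomials,
   i.e. psi_g o psi_h = id = psi_h o psi_g as rational maps. *)
Definition birational (h : tup) : Prop :=
  exists (e : nat) (g : tup) (q q' : {mpoly K[n.+1]}),
    [/\ homtup e g, nonzero g, q != 0 /\ q' != 0,
        (forall i, comp_tup g h i = q * 'X_i)
      & (forall i, comp_tup h g i = q' * 'X_i)].

(* the point [h] of the projective space: the set of nonzero multiples of h *)
Definition proj_class (h : tup) : tup -> Prop :=
  fun h' => exists c : K, c != 0 /\ h' = (fun i => c *: h i).

Definition Wd (d : nat) :=
  {C : tup -> Prop | exists h, [/\ homtup d h, nonzero h & C = proj_class h]}.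

(* Euclidean topology on the space of nonzero tuples of degree-d forms,
   via the coefficients *)
Definition vopen (d : nat) (S : tup -> Prop) : Prop :=
  forall h, S h -> exists e : K, 0 < e /\
    forall h', homtup d h' -> nonzero h' ->
      (forall i m, `|(h' i)@_m - (h i)@_m| < e) -> S h'.

(* quotient topology on W_d(k) *)
Definition Wopen (d : nat) (U : Wd d -> Prop) : Prop :=
  vopen d (fun h => [/\ homtup d h, nonzero h &
                       exists w, U w /\ sval w = proj_class h]).

Definition Hd (d : nat) (w : Wd d) : Prop :=
  exists h, sval w = proj_class h /\ birational h.

(* subspace topology on H_d(k) *)
Definition Hopen (d : nat) (O : Wd d -> Prop) : Prop :=
  exists U : Wd d -> Prop, Wopen U /\ forall w, O w <-> U w /\ Hd w.

(* the rational map psi_h : the class of polynomial tuples defining the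
   same rational map as h *)
Definition rclass (h : tup) : tup -> Prop :=
  fun h' => [/\ exists e, homtup e h', nonzero h' &
              (forall i j, h i * h' j = h j * h' i)].

Definition Bir :=
  {C : tup -> Prop | exists (d : nat) (h : tup),
     [/\ (1 <= d)%N, homtup d h, nonzero h, birational h & C = rclass h]}.

(* graph of pi_d : W_d -> Bir (restricted to H_d): pi_d w = b *)
Definition pi_rel (d : nat) (w : Wd d) (b : Bir) : Prop :=
  exists h, [/\ homtup d h, nonzero h, sval w = proj_class h & sval b = rclass h].

Definition bir_le (d : nat) (b : Bir) : Prop := exists w : Wd d, Hd w /\ pi_rel w b.

Definition pi_pre (d : nat) (V : Bir -> Prop) (w : Wd d) : Prop :=
  Hd w /\ exists b, V b /\ pi_rel w b.

(* quotient topology on Bir_{<= d} *)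
Definition bir_le_open (d : nat) (V : Bir -> Prop) : Prop :=
  (forall b, V b -> bir_le d b) /\ @Hopen d (@pi_pre d V).

(* inductive limit topology on Bir *)
Definition bir_open (U : Bir -> Prop) : Prop :=
  forall d, (1 <= d)%N -> bir_le_open d (fun b => U b /\ bir_le d b).

End Defs.

Definition ropen (R : realType) (A : R -> Prop) : Prop :=
  forall x, A x -> exists e : R, 0 < e /\ forall y, `|y - x| < e -> A y.

Definition ropen_in (R : realType) (D : R -> Prop) (S : R -> Prop) : Prop :=
  exists U, ropen U /\ forall t, S t <-> U t /\ D t.

Definition bir_continuous_on (R : realType) (K : numFieldType) (n : nat)
  (D : R -> Prop) (rho : R -> Bir K n) : Prop :=
  forall U, bir_open U -> ropen_in D (fun t => D t /\ U (rho t)).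

Definition Hd_continuous_on (R : realType) (K : numFieldType) (n d : nat)
  (D : R -> Prop) (f : R -> Wd K n d) : Prop :=
  (forall t, D t -> Hd (f t)) /\
  forall O : Wd K n d -> Prop, Hopen O -> ropen_in D (fun t => D t /\ O (f t)).

(* For b, c in k let h_{b,c} = l_b (x_0, ..., x_n) + c (0, ..., 0, x_1^2) with
   l_b = x_0 - b x_1.  Both composites of h_{b,c} and h_{b,-c} are l_b^3 id, so h_{b,c}
   is a quadratic birational map, and h_{b,0} defines the identity whatever b.  Let
   rho(t) = h_{osc t, t}, where osc t in [0, 1] oscillates infinitely often as t -> 0.
   Away from 0, rho is continuous because h_{b,c} depends continuously on (b, c); at 0
   every h_{b,0} is the identity, and compactness of [0, 1] gives a uniform neighbourhood.
   A continuous lift of rho through pi_d has a birational representative at t = 0, whose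
   first coordinate does not vanish at some v = (x, x^N, x^(N^2), ...) (Kronecker
   substitution); by continuity this persists for small t.  But arbitrarily small t have
   osc t = x / x^N, so that l_{osc t} vanishes at v while c x_1^2 does not, and this forces
   the first coordinate of every representative of rho(t) to vanish at v. *)

From HB Require Import structures.
From mathcomp Require Import all_boot all_order all_algebra.
From mathcomp Require Import mpoly complex reals.
From mathcomp Require Import boolp classical_sets topology normedtype.
From mathcomp Require Import ring lra.

Set Implicit Arguments.
Unset Strict Implicit.
Unset Printing Implicit Defensive.

Import Order.TTheory GRing.Theory Num.Theory.
Import numFieldNormedType.Exports.
Local Open Scope ring_scope.


Section Zigzag.
Variable R : realType.
Implicit Types u v t : R.

(* The distance from [u] to the nearest even integer. *)
Definition zigzag u : R := `|u - 2 * (Num.floor ((u + 1) / 2))%:~R|.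

Lemma zigzag_floor_bounds u : -1 <= u - 2 * (Num.floor ((u + 1) / 2))%:~R < 1.
Proof.
have := floor_le ((u + 1) / 2); have := floorD1_gt ((u + 1) / 2).
rewrite intrD; set k : R := (Num.floor _)%:~R => h1 h2.
apply/andP; split; lra.
Qed.

Lemma zigzag_ge0_le1 u : 0 <= zigzag u <= 1.
Proof.
rewrite /zigzag normr_ge0 ler_norml.
by have /andP[h1 h2] := zigzag_floor_bounds u; apply/andP; split; lra.
Qed.

Lemma zigzag_le_dist u (j : int) : zigzag u <= `|u - 2 * j%:~R|.
Proof.
have /andP[h1 h2] := zigzag_floor_bounds u.
rewrite /zigzag; set k := Num.floor _ in h1 h2 *.
have [->//|neq_jk] := eqVneq j k.
have dist_jk : 1 <= `|(k - j)%:~R : R|.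
  by rewrite -intr_norm ler1z -gtz0_ge1 normr_gt0 subr_eq0 eq_sym.
have -> : u - 2 * j%:~R = (u - 2 * k%:~R) + 2 * (k - j)%:~R by rewrite intrB; ring.
set a := u - 2 * k%:~R in h1 h2 *.
have ha : `|a| <= 1 by rewrite ler_norml; apply/andP; split; lra.
have := lerB_dist (2 * (k - j)%:~R) (- a).
rewrite opprK normrN normrM ger0_norm // addrC => dist_a.
by rewrite [a + _]addrC; lra.
Qed.

Lemma zigzag_lipschitz u v : `|zigzag u - zigzag v| <= `|u - v|.
Proof.
have le_zigzag x y : zigzag x <= `|x - y| + zigzag y.
  apply: le_trans (zigzag_le_dist x (Num.floor ((y + 1) / 2))) _.
  by rewrite -[X in `|X|](subrKA y) ler_normD.
rewrite ler_norml; have := le_zigzag u v; have := le_zigzag v u.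
by rewrite distrC => h1 h2; apply/andP; split; lra.
Qed.

Lemma zigzag_even_shift (k : int) (r : R) : 0 <= r < 1 -> zigzag (2 * k%:~R + r) = r.
Proof.
move=> /andP[r_ge0 r_lt1]; rewrite /zigzag.
have -> : Num.floor ((2 * k%:~R + r + 1) / 2) = k.
  by apply: floor_def; rewrite intrD; apply/andP; split; lra.
by rewrite addrAC subrr add0r ger0_norm.
Qed.

Definition osc t : R := zigzag t^-1.

Lemma osc_ge0_le1 t : 0 <= osc t <= 1.
Proof. exact: zigzag_ge0_le1. Qed.

Lemma osc_hits_near0 (d r : R) : 0 < d -> 0 <= r < 1 ->
  exists2 s, 0 < s < d & osc s = r.
Proof.
move=> d_gt0 /andP[r_ge0 r_lt1].
set N := Num.Def.archi_bound d^-1.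
have ltN : d^-1 < N%:R by apply: archi_boundP; rewrite invr_ge0 ltW.
set u : R := 2 * (N%:Z)%:~R + r.
have ltu : d^-1 < u by rewrite /u pmulrn; have := ler0n R N; lra.
have u_gt0 : 0 < u by apply: lt_trans ltu; rewrite invr_gt0.
exists u^-1; last by rewrite /osc invrK zigzag_even_shift ?r_ge0.
by rewrite invr_gt0 u_gt0 -(invrK d) ltf_pV2 ?posrE ?invr_gt0.
Qed.

Lemma osc_continuous t e : t != 0 -> 0 < e ->
  exists2 d, 0 < d & forall s, `|s - t| < d -> `|osc s - osc t| < e.
Proof.
move=> t_neq0 e_gt0; have t_gt0 : 0 < `|t| by rewrite normr_gt0.
exists (Num.min (`|t| / 2) (e * (`|t| * `|t|) / 2)).
  by rewrite lt_min !divr_gt0 ?mulr_gt0.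
move=> s; rewrite lt_min => /andP[st1 st2].
apply: le_lt_trans (zigzag_lipschitz _ _) _.
have s_big : `|t| / 2 < `|s| by have := lerB_dist t s; rewrite distrC; lra.
have s_neq0 : s != 0 by rewrite -normr_gt0; apply: lt_trans s_big; rewrite divr_gt0.
have -> : s^-1 - t^-1 = (t - s) / (s * t) by field; apply/andP.
rewrite normrM normfV normrM distrC ltr_pdivrMr ?mulr_gt0 ?normr_gt0 //.
by apply: lt_le_trans st2 _; rewrite -mulrA ler_pM2l // mulrAC ler_pM2r // ltW.
Qed.

End Zigzag.

Lemma unit_interval_tube (R : realType) (Q : R -> R -> Prop) :
  (forall b, 0 <= b <= 1 -> exists2 r, 0 < r &
     forall b' c, `|b' - b| < r -> `|c| < r -> Q b' c) ->
  exists2 e, 0 < e & forall b c, 0 <= b <= 1 -> `|c| < e -> Q b c.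
Proof.
move=> Q_local.
have /compact_near_coveringP cover := @segment_compact R 0 1.
have near0 : \forall c \near (0 : R), (`[0, 1] `<=` (fun b => Q b c))%classic.
  apply: (cover R (nbhs (0 : R)) (fun c b => Q b c) _) => b.
  rewrite /= in_itv /= => /Q_local[r r_gt0 near_b].
  exists (ball b r, ball 0 r); first by split; apply: nbhsx_ballx.
  by case=> b' c [/= bb' cc']; apply: near_b; [rewrite distrC | rewrite -normrN -sub0r].
have [e e_gt0 ball_e] := (nbhs_ballP _ _).1 near0.
exists e => // b c b01 c_lt; apply: (ball_e c); last by rewrite /= in_itv.
by rewrite /ball /= sub0r normrN.
Qed.

Lemma sval_inj (T : Type) (P : T -> Prop) : injective (@sval T P).
Proof. by case=> [a Pa] [b Pb] /= eq_ab; apply: eq_exist. Qed.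

Lemma mpolyXU_neq0 (R : nzRingType) k (i : 'I_k) : 'X_i != 0 :> {mpoly R[k]}.
Proof.
by apply/eqP => X0; have /eqP := @mcoeffXU k R i i; rewrite X0 mcoeff0 eqxx eq_sym oner_eq0.
Qed.

Section Classes.
Variables (K : numFieldType) (n : nat).
Implicit Types h : tup K n.

Lemma proj_class_refl h : proj_class h h.
Proof. by exists 1; split; [exact: oner_neq0 | apply: funext => i; rewrite scale1r]. Qed.

Lemma proj_class_eq h h' : proj_class h = proj_class h' ->
  exists c : K, c != 0 /\ h' = (fun i => c *: h i).
Proof. by move=> e; have := proj_class_refl h'; rewrite -e. Qed.

Lemma rclass_refl e h : homtup e h -> nonzero h -> rclass h h.
Proof. by split=> //; [exists e | move=> i j; rewrite mulrC]. Qed.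

Lemma rclass_scale c h : c != 0 -> rclass (fun i => c *: h i) = rclass h.
Proof.
move=> c_neq0; apply: funext => h'; apply: propext.
split=> -[he hnz hcross]; split=> // i j.
  by apply: (scalerI c_neq0); rewrite !scalerAl hcross.
by rewrite -!scalerAl hcross.
Qed.

Lemma rclass_mull f h : f != 0 -> rclass (fun i => f * h i) = rclass h.
Proof.
move=> f_neq0; apply: funext => h'; apply: propext.
split=> -[he hnz hcross]; split=> // i j.
  by apply: (mulfI f_neq0); rewrite !mulrA hcross.
by rewrite -!mulrA hcross.
Qed.

Lemma rclass_eq_cross e h h' : homtup e h -> nonzero h ->
  rclass h = rclass h' -> forall i j, h' i * h j = h' j * h i.
Proof. by move=> he hnz eq_hh'; have := rclass_refl he hnz; rewrite eq_hh' => -[]. Qed.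

Lemma birational_neq0 h i : birational h -> h i != 0.
Proof.
case=> _ [g [_ [q' [_ _ [_ q'_neq0] _ hg]]]]; apply: contraNneq q'_neq0 => hi0.
move: (hg i); rewrite /comp_tup hi0 comp_mpoly0 => /esym/eqP.
by rewrite mulf_eq0 (negbTE (mpolyXU_neq0 _ _)) orbF.
Qed.

Lemma comp_tupX h i : comp_mpoly [tuple h j | j < n.+1] 'X_i = h i.
Proof. by rewrite comp_mpolyXU -tnth_nth tnth_mktuple. Qed.

Definition Wd_of d (h : tup K n) (hd : homtup d h) (hnz : nonzero h) : Wd K n d :=
  exist _ (proj_class h) (ex_intro _ h (And3 hd hnz erefl)).

Lemma pi_rel_functional d (w : Wd K n d) (b b' : Bir K n) :
  pi_rel w b -> pi_rel w b' -> b = b'.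
Proof.
move=> [h [_ _ w_h b_h]] [h' [_ _ w_h' b'_h']]; apply: sval_inj.
have [c [c_neq0 h'_ch]] := proj_class_eq (etrans (esym w_h) w_h').
by rewrite b_h b'_h' h'_ch rclass_scale.
Qed.

End Classes.

Lemma base_expansion_inj k N (a b : 'I_k -> nat) :
  (forall i, a i < N)%N -> (forall i, b i < N)%N ->
  (\sum_(i < k) a i * N ^ i = \sum_(i < k) b i * N ^ i)%N -> a =1 b.
Proof.
elim: k a b => [|k IHk] a b a_lt b_lt; first by move=> _ [].
have shift (c : 'I_k.+1 -> nat) : (\sum_(i < k.+1) c i * N ^ i =
    c ord0 + N * \sum_(i < k) c (lift ord0 i) * N ^ i)%N.
  by rewrite big_ord_recl muln1 big_distrr; congr (_ + _)%N;
     apply: eq_bigr => i _; rewrite expnS mulnCA.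
have N_gt0 : (0 < N)%N by apply: leq_ltn_trans (a_lt ord0).
rewrite !shift => eq_ab.
have eq0 : a ord0 = b ord0.
  have mod_shift x y : ((x + N * y) %% N = x %% N)%N by rewrite addnC mulnC modnMDl.
  by have := congr1 (modn^~ N) eq_ab; rewrite /= !mod_shift !modn_small.
move: eq_ab; rewrite eq0 => /addnI/eqP; rewrite eqn_mul2l eqn0Ngt N_gt0 => /eqP.
move=> /(IHk (a \o lift ord0) (b \o lift ord0) (fun i => a_lt _) (fun i => b_lt _)) eq_lift.
by move=> i; case: (unliftP ord0 i) => [j ->|->] //; apply: eq_lift.
Qed.

Section Kronecker.
Variables (K : numDomainType) (k N : nat) (p : {mpoly K[k]}).

Definition kronecker_poly : {poly K} :=
  \sum_(m <- msupp p) p@_m *: 'X^(\sum_(i < k) m i * N ^ i).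

Lemma horner_kronecker (y : K) : kronecker_poly.[y] = p.@[fun i => y ^+ (N ^ i)].
Proof.
rewrite /kronecker_poly horner_sum mevalE; apply: eq_bigr => m _.
rewrite hornerZ hornerXn expr_sum; congr (_ * _).
by apply: eq_bigr => i _; rewrite -exprM mulnC.
Qed.

Hypothesis size_le : (msize p <= N)%N.

Lemma kronecker_poly_neq0 : p != 0 -> kronecker_poly != 0.
Proof.
move=> p_neq0; have lead_supp := mlead_supp p_neq0.
have digit_lt m i : m \in msupp p -> (m i < N)%N.
  move=> /msize_mdeg_lt m_lt; apply: leq_ltn_trans (leq_trans m_lt size_le).
  by rewrite mdegE (bigD1 i) //= leq_addr.
apply/eqP => /(congr1 (fun q : {poly K} => q`_(\sum_(i < k) mlead p i * N ^ i))).
rewrite coef0 coef_sum (bigD1_seq (mlead p)) ?msupp_uniq //= coefZ coefXn eqxx.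
rewrite big_seq_cond big1 ?mulr1 ?addr0 => [/eqP|m /andP[m_supp m_neq]].
  by rewrite mleadc_eq0 (negbTE p_neq0).
rewrite coefZ coefXn; case: eqP => [eq_m|]; last by rewrite mulr0.
move/negP: m_neq; case; apply/eqP/mnmP.
exact: (base_expansion_inj (digit_lt _^~ m_supp) (digit_lt _^~ lead_supp)).
Qed.

Lemma mpoly_nonvanishing_at_powers : p != 0 ->
  exists2 x : nat, (1 < x)%N & p.@[fun i => x%:R ^+ (N ^ i)] != 0.
Proof.
move=> /kronecker_poly_neq0 kp_neq0.
set xs := [seq (j.+2)%:R : K | j <- iota 0 (size kronecker_poly)].
have : ~~ all (root kronecker_poly) xs.
  apply/negP => all_roots.
  suff: uniq xs by move/(max_poly_roots kp_neq0 all_roots); rewrite size_map size_iota ltnn.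
  by rewrite map_inj_uniq ?iota_uniq // => j1 j2 /eqP; rewrite eqr_nat => /eqP [].
case/allPn => _ /mapP[j _ ->]; rewrite /root horner_kronecker => nonroot.
by exists j.+2.
Qed.

End Kronecker.

Section EvalNear.
Variables (K : numFieldType) (k d : nat) (v : 'I_k -> K).

Lemma meval_homog (q : {mpoly K[k]}) : q \is d.-homog ->
  q.@[v] = \sum_(m : 'X_{1..k < d.+1}) q@_m * \prod_(i < k) v i ^+ m i.
Proof.
move=> q_homog; have size_q : (msize q <= d.+1)%N.
  rewrite msizeE; apply/bigmax_leqP_seq => m m_supp _.
  by rewrite (dhomog_mf q_homog m_supp).
rewrite {1}(mpolywE size_q) raddf_sum /=.
by apply: eq_bigr => m _; rewrite mevalZ mevalX.
Qed.

Lemma meval_neq0_near (p : {mpoly K[k]}) : p \is d.-homog -> p.@[v] != 0 ->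
  exists2 e : K, 0 < e & forall p', p' \is d.-homog ->
    (forall m, `|p'@_m - p@_m| < e) -> p'.@[v] != 0.
Proof.
move=> p_homog pv_neq0.
pose M := \sum_(m : 'X_{1..k < d.+1}) `|\prod_(i < k) v i ^+ m i|.
have M_ge0 : 0 <= M by apply: sumr_ge0.
pose e := `|p.@[v]| / (M + 1).
exists e => [|p' p'_homog close]; first by rewrite divr_gt0 ?normr_gt0 ?ltr_wpDl.
have dist_le : `|p'.@[v] - p.@[v]| <= e * M.
  rewrite (meval_homog p_homog) (meval_homog p'_homog) -sumrB mulr_sumr.
  apply: le_trans (ler_norm_sum _ _ _) (ler_sum _ _) => m _.
  by rewrite -mulrBl normrM ler_wpM2r //; apply/ltW/close.
have bound_lt : e * M < `|p.@[v]|.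
  by rewrite mulrAC ltr_pdivrMr ?ltr_wpDl // ltr_pM2l ?normr_gt0 // ltrDl.
by apply: contraTneq dist_le => ->; rewrite sub0r normrN lt_geF.
Qed.

End EvalNear.

Section Nonvanishing.
Variables (K : numFieldType) (n d : nat) (i : 'I_n.+1) (v : 'I_n.+1 -> K).

Definition nonvanishing_at (w : Wd K n d) : Prop :=
  exists h, sval w = proj_class h /\ (h i).@[v] != 0.

Lemma Wopen_nonvanishing_at : Wopen nonvanishing_at.
Proof.
move=> h [h_homog h_nz [w [[h1 [w_h1 h1v]] w_h]]].
have [c [c_neq0 eq_h]] := proj_class_eq (etrans (esym w_h1) w_h); subst h.
have hv : (c *: h1 i).@[v] != 0 by rewrite mevalZ mulf_neq0.
have [e e_gt0 near_h] := meval_neq0_near (h_homog i) hv.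
exists e; split=> // h' h'_homog h'_nz close; split=> //.
exists (Wd_of h'_homog h'_nz); split=> //.
by exists h'; split=> //; apply: near_h.
Qed.

Lemma lift_nonvanishing_near (R : realType) (D : R -> Prop) (f : R -> Wd K n d) t0 :
  Hd_continuous_on D f -> D t0 -> nonvanishing_at (f t0) ->
  exists2 r, 0 < r & forall s, D s -> `|s - t0| < r -> nonvanishing_at (f s).
Proof.
move=> [f_Hd f_cont] D_t0 nv_t0.
have [W [W_open W_iff]] := f_cont (fun w => nonvanishing_at w /\ Hd w)
  (ex_intro _ _ (conj Wopen_nonvanishing_at (fun w => iff_refl _))).
have [W_t0 _] := (W_iff t0).1 (conj D_t0 (conj nv_t0 (f_Hd _ D_t0))).
have [r [r_gt0 near_t0]] := W_open t0 W_t0.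
by exists r => // s D_s /near_t0 W_s; have [_ []] := (W_iff s).2 (conj W_s D_s).
Qed.

End Nonvanishing.

Section Family.
Variables (K : numFieldType) (n : nat).
Hypothesis n_ge2 : (2 <= n)%N.
Local Notation MP := {mpoly K[n.+1]}.

Definition idx1 : 'I_n.+1 := inord 1.

Lemma idx1_val : idx1 = 1%N :> nat.
Proof. by rewrite inordK // ltnS (leq_trans _ n_ge2). Qed.

Lemma ord0_max : (ord0 == ord_max :> 'I_n.+1) = false.
Proof. by rewrite -val_eqE /= eq_sym gtn_eqF // (leq_trans _ n_ge2). Qed.

Lemma idx1_max : (idx1 == ord_max) = false.
Proof. by rewrite -val_eqE /= idx1_val eq_sym gtn_eqF. Qed.

Lemma ord0_idx1 : (ord0 == idx1) = false.
Proof. by rewrite -val_eqE /= idx1_val. Qed.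

Definition lform (b : K) : MP := 'X_ord0 - b%:MP * 'X_idx1.
Definition quad (i : 'I_n.+1) : MP := if i == ord_max then 'X_idx1 ^+ 2 else 0.
Definition htup (b c : K) : tup K n := fun i => lform b * 'X_i + c%:MP * quad i.

Lemma htup_ord0 b c : htup b c ord0 = lform b * 'X_ord0.
Proof. by rewrite /htup /quad ord0_max mulr0 addr0. Qed.

Lemma comp_htup b c c' i : comp_tup (htup b c') (htup b c) i =
  lform b ^+ 3 * 'X_i + (c + c')%:MP * (lform b ^+ 2 * quad i).
Proof.
have comp_lform : comp_mpoly [tuple htup b c j | j < n.+1] (lform b) = lform b ^+ 2.
  rewrite rmorphB rmorphM /= comp_mpolyC !comp_tupX htup_ord0.
  by rewrite /htup /quad idx1_max mulr0 addr0 /lform; ring.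
rewrite /comp_tup /htup rmorphD !rmorphM /= comp_lform comp_mpolyC comp_tupX.
rewrite /quad; case: (i == ord_max); rewrite ?raddf0 ?rmorphXn /= ?comp_tupX.
  by rewrite /htup /quad idx1_max mulr0 addr0 raddfD; ring.
by rewrite !mulr0 !addr0; ring.
Qed.

Lemma lform_neq0 b : lform b != 0.
Proof.
apply/eqP => /(congr1 (mcoeff U_(ord0))).
rewrite mcoeffB mcoeffCM !mcoeffXU eqxx eq_sym ord0_idx1 mulr0 subr0 mcoeff0.
exact/eqP/oner_neq0.
Qed.

Lemma homtup_htup b c : homtup 2 (htup b c).
Proof.
have X_homog (j : 'I_n.+1) : ('X_j : MP) \is 1.-homog by rewrite dhomogX /= mdeg1.
have lform_homog : lform b \is 1.-homog.
  by rewrite rpredB ?X_homog // mul_mpolyC dhomogZ.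
move=> i; rewrite rpredD ?(dhomogM lform_homog) // mul_mpolyC dhomogZ // /quad.
by case: ifP => _; [exact: (dhomogMn 2 (X_homog _)) | exact: dhomog0].
Qed.

Lemma nonzero_htup b c : nonzero (htup b c).
Proof. by exists ord0; rewrite htup_ord0 mulf_neq0 ?lform_neq0 ?mpolyXU_neq0. Qed.

Lemma birational_htup b c : birational (htup b c).
Proof.
exists 2%N, (htup b (- c)), (lform b ^+ 3), (lform b ^+ 3); split.
- exact: homtup_htup.
- exact: nonzero_htup.
- by split; rewrite expf_neq0 // lform_neq0.
- by move=> i; rewrite comp_htup addrN mul0r addr0.
- by move=> i; rewrite comp_htup addNr mul0r addr0.
Qed.

Lemma rclass_htup0 b b' : rclass (htup b 0) = rclass (htup b' 0).
Proof.
have htup0 b0 : htup b0 0 = (fun i => lform b0 * 'X_i).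
  by apply: funext => i; rewrite /htup mul0r addr0.
by rewrite !htup0 !rclass_mull ?lform_neq0.
Qed.

Lemma htup_coef_close (b c b' c' : K) i m :
  `|(htup b' c' i)@_m - (htup b c i)@_m| <= `|b - b'| + `|c' - c|.
Proof.
have norm_bool (bit : bool) : `|bit%:R : K| <= 1 by case: bit; rewrite ?normr1 ?normr0.
have -> : (htup b' c' i)@_m - (htup b c i)@_m =
    (b - b') * ('X_[U_(idx1) + U_(i)] : MP)@_m + (c' - c) * (quad i)@_m.
  rewrite -mcoeffB -!mcoeffCM -mcoeffD; congr (mcoeff m _).
  by rewrite /htup /lform mpolyXD !raddfB /=; ring.
apply: le_trans (ler_normD _ _) (lerD _ _); rewrite normrM ler_piMr //.
  by rewrite mcoeffX.
by rewrite /quad; case: ifP => _; rewrite ?mpolyXn ?mcoeffX ?mcoeff0 ?normr0.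
Qed.

Lemma rclass_htup_root (v : 'I_n.+1 -> K) b c (h : tup K n) :
  (lform b).@[v] = 0 -> v idx1 != 0 -> c != 0 ->
  rclass (htup b c) = rclass h -> (h ord0).@[v] = 0.
Proof.
move=> lform_v v1_neq0 c_neq0 /(rclass_eq_cross (homtup_htup b c) (nonzero_htup b c)).
move=> /(_ ord0 ord_max)/(congr1 (meval v)); rewrite !mevalM htup_ord0 mevalM lform_v.
rewrite mul0r mulr0 => /eqP; rewrite mulf_eq0 => /orP[/eqP //|].
rewrite /htup /quad eqxx mevalD !mevalM lform_v mul0r add0r mevalC mevalXU.
by rewrite !mulf_eq0 (negbTE c_neq0) (negbTE v1_neq0).
Qed.

End Family.

Lemma kfld_real_embedding (R : realType) (b : bool) :
  exists io : {rmorphism R -> kfld R b}, [/\ forall x, `|io x| = io `|x|,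
    forall x y, (io x < io y) = (x < y) &
    forall e, 0 < e -> exists2 d : R, 0 < d & io d = e].
Proof.
case: b; [exists (real_complex R) | exists idfun]; split=> //.
- by move=> x; rewrite normc_def /= expr0n addr0 sqrtr_sqr.
- by move=> x y; rewrite ltcR.
- by case=> a c; rewrite ltcE /= => /andP[/eqP -> a_gt0]; exists a.
- by move=> e e_gt0; exists e.
Qed.

Section Path.
Variables (R : realType) (K : numFieldType) (io : {rmorphism R -> K}) (n : nat).
Hypothesis io_norm : forall x, `|io x| = io `|x|.
Hypothesis io_lt : forall x y, (io x < io y) = (x < y).
Hypothesis io_onto_pos : forall e : K, 0 < e -> exists2 d : R, 0 < d & io d = e.
Hypothesis n_ge2 : (2 <= n)%N.

Definition Wd_htup b c : Wd K n 2 := Wd_of (homtup_htup b c) (nonzero_htup n_ge2 b c).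

Definition Bir_htup b c : Bir K n :=
  exist _ (rclass (htup b c)) (ex_intro _ 2%N (ex_intro _ (htup b c)
    (And5 isT (homtup_htup b c) (nonzero_htup n_ge2 b c) (birational_htup n_ge2 b c) erefl))).

Lemma pi_rel_htup b c : pi_rel (Wd_htup b c) (Bir_htup b c).
Proof. by exists (htup b c); split=> //; [exact: homtup_htup | exact: nonzero_htup]. Qed.

Lemma Hd_htup b c : Hd (Wd_htup b c).
Proof. by exists (htup b c); split=> //; exact: birational_htup. Qed.

Lemma Bir_htup0 b b' : Bir_htup b 0 = Bir_htup b' 0.
Proof. by apply: sval_inj; exact: rclass_htup0. Qed.

Lemma bir_open_htup_near U b c : bir_open U -> U (Bir_htup b c) ->
  exists2 e : K, 0 < e & forall b' c', `|b - b'| + `|c' - c| < e -> U (Bir_htup b' c').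
Proof.
move=> U_open U_bc; have [_ [V [V_open V_iff]]] := U_open 2%N isT.
have [V_bc _] : V (Wd_htup b c) /\ Hd (Wd_htup b c).
  apply/V_iff; split; first exact: Hd_htup.
  exists (Bir_htup b c); split; last exact: pi_rel_htup.
  by split=> //; exists (Wd_htup b c); split; [exact: Hd_htup | exact: pi_rel_htup].
have [e [e_gt0 near_bc]] := V_open (htup b c)
  (And3 (homtup_htup b c) (nonzero_htup n_ge2 b c) (ex_intro _ _ (conj V_bc erefl))).
exists e => // b' c' close.
have [_ _ [w [V_w w_h]]] := near_bc (htup b' c') (homtup_htup b' c')
  (nonzero_htup n_ge2 b' c') (fun i m => le_lt_trans (htup_coef_close _ _ _ _ i m) close).
have w_htup : w = Wd_htup b' c' by apply: sval_inj.
rewrite {}w_htup in V_w.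
have [_ [b0 [[U_b0 _] pi_b0]]] := (V_iff _).2 (conj V_w (Hd_htup b' c')).
by rewrite -(pi_rel_functional pi_b0 (pi_rel_htup b' c')).
Qed.

Lemma bir_open_path_near U (b c : R) : bir_open U -> U (Bir_htup (io b) (io c)) ->
  exists2 r : R, 0 < r & forall b' c', `|b' - b| < r -> `|c' - c| < r ->
    U (Bir_htup (io b') (io c')).
Proof.
move=> U_open /(bir_open_htup_near U_open)[e e_gt0 near_bc].
have [r r_gt0 io_r] := io_onto_pos e_gt0.
exists (r / 2) => [|b' c' bb' cc']; first by rewrite divr_gt0.
apply: near_bc; rewrite -!rmorphB !io_norm -rmorphD -io_r io_lt distrC.
by rewrite [r]splitr ltrD.
Qed.

Definition rho t : Bir K n := Bir_htup (io (osc t)) (io t).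

Lemma rho_near0 U : bir_open U -> U (rho 0) ->
  exists2 r, 0 < r & forall s, `|s| < r -> U (rho s).
Proof.
move=> U_open U_rho0.
have [e e_gt0 near0] : exists2 e, 0 < e &
    forall b c, 0 <= b <= 1 -> `|c| < e -> U (Bir_htup (io b) (io c)).
  apply: unit_interval_tube => b _.
  have [|r r_gt0 near_b] := bir_open_path_near (b := b) (c := 0) U_open.
    by rewrite rmorph0 (Bir_htup0 _ (io (osc 0))) -(rmorph0 io).
  by exists r => // b' c' bb' cc'; apply: near_b; rewrite ?subr0.
by exists e => // s; apply: near0 (osc_ge0_le1 s).
Qed.

Lemma rho_near U t : bir_open U -> U (rho t) ->
  exists2 r, 0 < r & forall s, `|s - t| < r -> U (rho s).
Proof.
move=> U_open U_t; have [t0|t_neq0] := eqVneq t 0.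
  move: U_t; rewrite t0 => /(rho_near0 U_open)[r r_gt0 near0].
  by exists r => // s; rewrite subr0; apply: near0.
have [r r_gt0 near_t] := bir_open_path_near U_open U_t.
have [d d_gt0 osc_near] := osc_continuous t_neq0 r_gt0.
exists (Num.min d r) => [|s]; first by rewrite lt_min d_gt0.
by rewrite lt_min => /andP[sd sr]; apply: near_t => //; apply: osc_near.
Qed.

Lemma rho_continuous : bir_continuous_on (fun t : R => -1 <= t <= 1) rho.
Proof.
move=> U U_open; exists (fun t => U (rho t)); split; last by move=> t; split=> -[].
by move=> t /(rho_near U_open)[r r_gt0 near_t]; exists r.
Qed.

Lemma rho_root_at_powers (x N : nat) s (h : tup K n) :
  (0 < x)%N -> s != 0 -> osc s = x%:R / x%:R ^+ N -> sval (rho s) = rclass h ->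
  (h ord0).@[fun i => x%:R ^+ (N ^ i)] = 0.
Proof.
move=> x_gt0 s_neq0 osc_s; apply: (rclass_htup_root n_ge2).
- rewrite mevalB mevalM mevalC !mevalXU osc_s (idx1_val n_ge2) expn1.
  rewrite [(N ^ ord0)%N]expn0 expr1 fmorph_div rmorphXn rmorph_nat divfK ?subrr //.
  by rewrite expf_neq0 // pnatr_eq0 -lt0n.
- by rewrite expf_neq0 // pnatr_eq0 -lt0n.
- by rewrite fmorph_eq0.
Qed.

Lemma rho_no_local_lift eps d : 0 < eps ->
  ~ exists f : R -> Wd K n d,
      Hd_continuous_on (fun t : R => - eps < t < eps) f /\
      forall t : R, - eps < t < eps -> pi_rel (f t) (rho t).
Proof.
move=> eps_gt0 [f [f_cont f_lift]].
have D0 : - eps < 0 < eps by rewrite oppr_lt0 eps_gt0.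
have [h0 [f0_h0 /(birational_neq0 ord0) h00_neq0]] := f_cont.1 0 D0.
(* N >= msize (h0 ord0) for the Kronecker substitution, and N >= 2 so that x / x^N < 1. *)
pose N := (msize (h0 ord0)).+2.
have [|x x_gt1 h0_v] := @mpoly_nonvanishing_at_powers _ _ N _ _ h00_neq0.
  by apply/leqW/leqnSn.
have [r r_gt0 nv_near] := lift_nonvanishing_near f_cont D0 (ex_intro _ h0 (conj f0_h0 h0_v)).
have ratio : 0 <= (x%:R : R) / x%:R ^+ N < 1.
  rewrite divr_ge0 ?exprn_ge0 //= ltr_pdivrMr ?exprn_gt0 ?ltr0n ?(ltnW x_gt1) // mul1r.
  by rewrite -natrX ltr_nat -{1}(expn1 x) ltn_exp2l.
have min_gt0 : 0 < Num.min r eps by rewrite lt_min r_gt0.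
have [s /andP[s_gt0]] := osc_hits_near0 min_gt0 ratio.
rewrite lt_min => /andP[s_r s_eps] osc_s.
have D_s : - eps < s < eps by rewrite s_eps (lt_trans _ s_gt0) ?oppr_lt0.
have [h [fs_h h_v]] : nonvanishing_at ord0 (fun i => x%:R ^+ (N ^ i)) (f s).
  by apply: nv_near; rewrite ?subr0 ?gtr0_norm.
have [h' [_ _ fs_h' rho_h']] := f_lift s D_s.
have [c [c_neq0 h'_ch]] := proj_class_eq (etrans (esym fs_h) fs_h').
have := rho_root_at_powers (ltnW x_gt1) (lt0r_neq0 s_gt0) osc_s rho_h'.
by rewrite h'_ch mevalZ => /eqP; rewrite mulf_eq0 (negbTE c_neq0) (negbTE h_v).
Qed.

End Path.

Theorem proposition1p4 (R : realType) (b : bool) (n : nat) :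
  (2 <= n)%N ->
  exists rho : R -> Bir (kfld R b) n,
    bir_continuous_on (fun t : R => -1 <= t <= 1) rho /\
    forall eps : R, 0 < eps -> eps <= 1 ->
    forall d : nat, (1 <= d)%N ->
    ~ exists rho_eps : R -> Wd (kfld R b) n d,
        Hd_continuous_on (fun t : R => - eps < t < eps) rho_eps /\
        forall t : R, - eps < t < eps -> pi_rel (rho_eps t) (rho t).
Proof.
move=> n_ge2; have [io [io_norm io_lt io_onto_pos]] := kfld_real_embedding R b.
exists (rho io n_ge2); split; first exact: rho_continuous.
by move=> eps eps_gt0 _ d _; apply: rho_no_local_lift.
Qed.
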